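(* Let $n\ge2$ be an integer and $p=n(n+1)$. Consider all pairs $(f,c)$ with $c>0$ and $f$ a real solution on $(-1,1)$ of $(1-s^2)f''-2sf'+pf=0$ that extends continuously to $s=1$ with $f(1)>1$, for which there is a point $x\in(-1,1)$ with $f(x)=h_c(x)$, $f'(x)=h_c'(x)$, and $f>h_c$ on $(x,1]$. Then the smallest $c$ for which such a pair exists is $c=\frac{1+z_p}{1-z_p}$.
   Context: $h_c(s)=\big(\frac{1+s}{2}\big)^p-c^p\big(\frac{1-s}{2}\big)^p$ for $s\in[-1,1]$. $L_n$ denotes the Legendre polynomial $L_n(s)=\frac{1}{2^nn!}\frac{d^n}{ds^n}(s^2-1)^n$ (so $L_n(1)=1$), and $z_p$ is the largest zero of $L_n$ in $(-1,1)$. *)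

From Stdlib Require Import Reals Lra Arith Factorial.
Open Scope R_scope.

Definition pexp (n : nat) : nat := (n * (n + 1))%nat.

Definition hc (n : nat) (c s : R) : R :=
  ((1 + s) / 2) ^ pexp n - c ^ pexp n * ((1 - s) / 2) ^ pexp n.

(* L is the Legendre polynomial L_n, via Rodrigues' formula:
   L(s) = 1/(2^n n!) d^n/ds^n (s^2-1)^n, with the iterated derivatives
   g 0, ..., g n of (s^2-1)^n taken everywhere on R. *)
Definition is_legendre (n : nat) (L : R -> R) : Prop :=
  exists g : nat -> R -> R,
    (forall s, g 0%nat s = (s ^ 2 - 1) ^ n) /\
    (forall k s, (k < n)%nat -> derivable_pt_lim (g k) s (g (S k) s)) /\
    (forall s, L s = g n s / (2 ^ n * INR (fact n))).

Definition is_largest_zero (L : R -> R) (z : R) : Prop :=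
  -1 < z < 1 /\ L z = 0 /\ (forall y, -1 < y < 1 -> L y = 0 -> y <= z).

Definition legendre_sol (n : nat) (f : R -> R) : Prop :=
  exists f1 f2 : R -> R,
    forall s, -1 < s < 1 ->
      derivable_pt_lim f s (f1 s) /\ derivable_pt_lim f1 s (f2 s) /\
      (1 - s ^ 2) * f2 s - 2 * s * f1 s + INR (pexp n) * f s = 0.

(* admissible pair (f,c): c > 0, f a solution on (-1,1) which extends
   continuously to s = 1 (the extension value being f 1), f(1) > 1, and there
   is x in (-1,1) where f touches h_c (same value and derivative) with
   f > h_c on (x,1]. *)
Definition admissible (n : nat) (f : R -> R) (c : R) : Prop :=
  0 < c /\ legendre_sol n f /\
  limit1_in f (fun s => -1 < s < 1) (f 1) 1 /\
  f 1 > 1 /\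
  exists x d, -1 < x < 1 /\ f x = hc n c x /\
    derivable_pt_lim f x d /\ derivable_pt_lim (hc n c) x d /\
    (forall s, x < s <= 1 -> f s > hc n c s).

Definition admissible_c (n : nat) (c : R) : Prop :=
  exists f : R -> R, admissible n f c.

From Stdlib Require Import Reals Lra Lia FunctionalExtensionality Factorial.
Open Scope R_scope.

(* Let p = n(n+1), A = (1+s)/2, B = (1-s)/2, so h_c = A^p - c^p B^p.  Then
   (1-s^2) h_c'' - 2s h_c' + p h_c = p^2 A B (A^(p-2) - c^p B^(p-2)) changes sign at most once
   on (-1,1), from - to +.  For f = a L_n with a > 0, the Wronskian W = (1-s^2)(f' h_c - f h_c')
   satisfies W' = -f p^2 A B (A^(p-2) - c^p B^(p-2)) and (f/h_c)' = W / ((1-s^2) h_c^2).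
   A solution bounded at 1 is a multiple of L_n, since otherwise its constant Wronskian with L_n
   is nonzero and f/L_n grows like -ln (1-s).
   For c = (1+z)/(1-z), h_c vanishes at z and the multiple of L_n with the same slope has
   W(z) = W(1) = 0, so W > 0 on (z,1) and f/h_c increases from its limit 1 at z.
   For smaller c, h_c > 0 on [z,1], so a tangency point x lies right of z; there
   W(x) = 0 <= W(z), which forces W < 0 after x, and f/h_c drops below 1. *)

(** * Real-analysis preliminaries *)

Lemma pow_lt_pow_l x y m : 0 <= x < y -> m <> 0%nat -> x ^ m < y ^ m.
Proof.
  intros [Hx Hxy] Hm. induction m as [|m IH]; [lia|].
  destruct (Nat.eq_dec m 0) as [->|Hm']; [simpl; lra|].
  specialize (IH Hm'). simpl.
  assert (0 <= x ^ m) by (apply pow_le; lra). nra.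
Qed.

Lemma Rdiv_lt_iff x y d : 0 < d -> (x / d < y <-> x < y * d).
Proof.
  intros Hd. replace x with (x / d * d) at 2 by (field; lra).
  split; intros H; [apply Rmult_lt_compat_r|apply Rmult_lt_reg_r with d]; assumption.
Qed.

Lemma lt_Rdiv_iff x y d : 0 < d -> (y < x / d <-> y * d < x).
Proof.
  intros Hd. replace x with (x / d * d) at 2 by (field; lra).
  split; intros H; [apply Rmult_lt_compat_r|apply Rmult_lt_reg_r with d]; assumption.
Qed.

Lemma derivable_pt_lim_rew f x l l' :
  derivable_pt_lim f x l -> l = l' -> derivable_pt_lim f x l'.
Proof. intros D <-; exact D. Qed.

Lemma derivable_pt_lim_plus_fun (f g : R -> R) x a b :
  derivable_pt_lim f x a -> derivable_pt_lim g x b ->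
  derivable_pt_lim (fun y => f y + g y) x (a + b).
Proof. apply derivable_pt_lim_plus. Qed.

Lemma derivable_pt_lim_mult_fun (f g : R -> R) x a b :
  derivable_pt_lim f x a -> derivable_pt_lim g x b ->
  derivable_pt_lim (fun y => f y * g y) x (a * g x + f x * b).
Proof. apply derivable_pt_lim_mult. Qed.

Lemma derivable_pt_lim_scal_fun (f : R -> R) k x a :
  derivable_pt_lim f x a -> derivable_pt_lim (fun y => k * f y) x (k * a).
Proof. apply derivable_pt_lim_scal. Qed.

Lemma derivable_pt_lim_affine_pow a b m s :
  derivable_pt_lim (fun y => (a + b * y) ^ m) s (INR m * (a + b * s) ^ pred m * b).
Proof.
  apply (derivable_pt_lim_comp (fun y => a + b * y) (fun y => y ^ m)).
  - apply (derivable_pt_lim_rew (fun y => a + b * y) s (0 + b * 1)); [|ring].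
    apply derivable_pt_lim_plus_fun; [apply derivable_pt_lim_const|].
    apply derivable_pt_lim_scal_fun, derivable_pt_lim_id.
  - apply derivable_pt_lim_pow.
Qed.

Lemma derivable_pt_lim_ratio (F G : R -> R) F1 G1 y :
  derivable_pt_lim F y F1 -> derivable_pt_lim G y G1 -> G y <> 0 ->
  derivable_pt_lim (fun s => F s / G s) y ((F1 * G y - F y * G1) / G y ^ 2).
Proof.
  intros DF DG HG. eapply derivable_pt_lim_rew.
  - exact (derivable_pt_lim_div F G y F1 G1 DF DG HG).
  - unfold Rsqr. field. exact HG.
Qed.

Lemma eq_of_derivative_zero (V : R -> R) a b s t :
  (forall y, a < y < b -> derivable_pt_lim V y 0) -> a < s < b -> a < t < b -> V s = V t.
Proof.
  intros D Hs Ht.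
  assert (K : forall u v, a < u < b -> a < v < b -> u < v -> V u = V v).
  { intros u v Hu Hv Huv.
    destruct (MVT_cor2 V (fun _ => 0) u v Huv) as [c [Hc _]]; [intros; apply D; lra|].
    lra. }
  destruct (Rtotal_order s t) as [|[->|]]; [auto|reflexivity|symmetry; auto].
Qed.

Lemma lt_of_derivative_pos (f f' : R -> R) a b : a < b ->
  (forall y, a <= y <= b -> derivable_pt_lim f y (f' y)) ->
  (forall y, a < y < b -> 0 < f' y) -> f a < f b.
Proof.
  intros Hab D Hpos. destruct (MVT_cor2 f f' a b Hab D) as [c [Hc Hac]].
  specialize (Hpos c Hac). nra.
Qed.

Lemma lt_of_derivative_neg (f f' : R -> R) a b : a < b ->
  (forall y, a <= y <= b -> derivable_pt_lim f y (f' y)) ->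
  (forall y, a < y < b -> f' y < 0) -> f b < f a.
Proof.
  intros Hab D Hneg. destruct (MVT_cor2 f f' a b Hab D) as [c [Hc Hac]].
  specialize (Hneg c Hac). nra.
Qed.

Lemma derivative_nonneg_of_right_nonneg (F : R -> R) x d t0 :
  derivable_pt_lim F x d -> F x = 0 -> x < t0 ->
  (forall y, x < y < t0 -> 0 <= F y) -> 0 <= d.
Proof.
  intros D F0 Ht0 Hnn. destruct (Rle_lt_dec 0 d) as [|Hd]; [assumption|exfalso].
  destruct (D (- d / 2)) as [e He]; [lra|].
  set (h := Rmin e (t0 - x) / 2).
  assert (Hm : 0 < Rmin e (t0 - x)) by (apply Rmin_pos; [apply cond_pos|lra]).
  pose proof (Rmin_l e (t0 - x)). pose proof (Rmin_r e (t0 - x)).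
  assert (Hh : 0 < h < e /\ h < t0 - x) by (unfold h; lra).
  specialize (He h ltac:(lra) ltac:(rewrite Rabs_pos_eq; lra)).
  rewrite F0, Rminus_0_r in He. apply Rabs_def2 in He.
  assert (0 <= F (x + h) / h) by (apply Rle_mult_inv_pos; [apply Hnn|]; lra).
  lra.
Qed.

Lemma limit1_in_continuity_pt (f : R -> R) (D : R -> Prop) x :
  continuity_pt f x -> limit1_in f D (f x) x.
Proof.
  intros Hc eps He. destruct (Hc eps He) as [alp [Ha Hx]].
  exists alp; split; [assumption|]. intros y [_ Hy].
  destruct (Req_dec y x) as [->|Hne].
  - rewrite R_dist_eq. exact He.
  - apply Hx. split; [split; [exact I|auto]|exact Hy].
Qed.

Lemma limit1_in_subset (f : R -> R) (D D' : R -> Prop) l x :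
  (forall y, D' y -> D y) -> limit1_in f D l x -> limit1_in f D' l x.
Proof.
  intros Hsub Hl eps He. destruct (Hl eps He) as [alp [Ha Hx]].
  exists alp; split; [assumption|]. intros y [Dy Hy]. apply Hx. auto.
Qed.

Lemma limit1_in_interval_unique (f g : R -> R) a b x0 l l' :
  a < b -> a <= x0 <= b -> (forall y, a < y < b -> f y = g y) ->
  limit1_in f (fun y => a < y < b) l x0 -> limit1_in g (fun y => a < y < b) l' x0 ->
  l = l'.
Proof.
  intros Hab Hx0 Hfg Hf Hg.
  apply (single_limit g (fun y => a < y < b) l l' x0); [ | | exact Hg].
  - intros alp Ha. set (e := Rmin alp (b - a) / 4).
    assert (He : 0 < Rmin alp (b - a)) by (apply Rmin_pos; lra).
    pose proof (Rmin_l alp (b - a)). pose proof (Rmin_r alp (b - a)).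
    destruct (Rle_lt_dec x0 ((a + b) / 2)).
    + exists (x0 + e). unfold Rdist. split; [unfold e; lra|].
      rewrite Rabs_pos_eq; unfold e; lra.
    + exists (x0 - e). unfold Rdist. split; [unfold e; lra|].
      rewrite Rabs_left; unfold e; lra.
  - intros eps He. destruct (Hf eps He) as [alp [Ha Hx]].
    exists alp; split; [assumption|]. intros y [Dy Hy]. rewrite <- Hfg by exact Dy. auto.
Qed.

Lemma limit1_in_close_left (f : R -> R) (D : R -> Prop) l x0 eps :
  limit1_in f D l x0 -> 0 < eps ->
  exists b, b < x0 /\ forall y, D y -> b < y < x0 -> Rabs (f y - l) < eps.
Proof.
  intros Hl He. destruct (Hl eps He) as [alp [Ha Hx]].
  exists (x0 - alp). split; [lra|]. intros y Dy Hy. apply (Hx y). split; [exact Dy|].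
  simpl; unfold Rdist. rewrite Rabs_left; lra.
Qed.

(* Comparison with [- k ln (1 - s)], whose derivative is [k / (1 - s)]. *)
Lemma unbounded_of_derivative_ge_inv (R0 R1 : R -> R) b k :
  b < 1 -> 0 < k ->
  (forall s, b < s < 1 -> derivable_pt_lim R0 s (R1 s) /\ k / (1 - s) <= R1 s) ->
  forall B, exists t, b < t < 1 /\ B < R0 t.
Proof.
  intros Hb Hk HD B.
  set (phi := fun s => R0 s + k * ln (1 - s)).
  set (s0 := (b + 1) / 2).
  set (X := 1 + Rabs (ln (1 - s0)) + Rabs ((B - phi s0) / k)).
  set (t := 1 - exp (- X)).
  assert (He : exp (- X) < 1 - s0).
  { rewrite <- (exp_ln (1 - s0)) by (unfold s0; lra). apply exp_increasing.
    pose proof (Rle_abs (- ln (1 - s0))). rewrite Rabs_Ropp in H.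
    pose proof (Rabs_pos ((B - phi s0) / k)). unfold X. lra. }
  pose proof (exp_pos (- X)).
  assert (Ht : s0 < t < 1) by (unfold t; lra).
  exists t. split; [unfold s0 in *; lra|].
  destruct (MVT_cor2 phi (fun s => R1 s - k / (1 - s)) s0 t) as [xi [Hm Hxi]]; [lra| |].
  { intros y Hy. apply (derivable_pt_lim_rew _ _ (R1 y + k * (- / (1 - y)))).
    - apply derivable_pt_lim_plus_fun; [apply HD; unfold s0 in *; lra|].
      apply derivable_pt_lim_scal_fun.
      apply (derivable_pt_lim_rew _ _ (/ (1 - y) * (0 - 1))); [|field; lra].
      apply (derivable_pt_lim_comp (fun y => 1 - y) ln).
      + apply derivable_pt_lim_minus; [apply derivable_pt_lim_const|apply derivable_pt_lim_id].
      + apply derivable_pt_lim_ln. lra.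
    - unfold Rdiv. ring. }
  assert (0 <= (R1 xi - k / (1 - xi)) * (t - s0))
    by (apply Rmult_le_pos; [pose proof (proj2 (HD xi ltac:(unfold s0 in *; lra)))|]; lra).
  assert (Hphit : phi t = R0 t - k * X).
  { unfold phi, t. replace (1 - (1 - exp (- X))) with (exp (- X)) by ring.
    rewrite ln_exp. ring. }
  assert (k * ((B - phi s0) / k) = B - phi s0) by (field; lra).
  assert (k * ((B - phi s0) / k) <= k * Rabs ((B - phi s0) / k))
    by (apply Rmult_le_compat_l; [lra|apply Rle_abs]).
  assert (0 <= k * Rabs (ln (1 - s0))) by (apply Rmult_le_pos; [lra|apply Rabs_pos]).
  assert (k * X = k + k * Rabs (ln (1 - s0)) + k * Rabs ((B - phi s0) / k)) by (unfold X; ring).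
  lra.
Qed.

(** * Derivatives of (s^2 - 1)^n and the Legendre polynomial *)

Fixpoint falling (m k : nat) : R :=
  match k with O => 1 | S k' => falling m k' * INR (m - k') end.

Lemma falling_pos m k : (k <= m)%nat -> 0 < falling m k.
Proof.
  induction k as [|k IH]; simpl; intros Hk; [lra|].
  apply Rmult_lt_0_compat; [apply IH; lia|apply lt_0_INR; lia].
Qed.

Lemma falling_zero m k : (m < k)%nat -> falling m k = 0.
Proof.
  induction k as [|k IH]; simpl; intros Hk; [lia|].
  destruct (Nat.eq_dec k m) as [->|Hne].
  - rewrite Nat.sub_diag. simpl. ring.
  - rewrite IH by lia. ring.
Qed.

Lemma C_0 n : C n 0 = 1.
Proof. unfold C. rewrite Nat.sub_0_r. simpl. field. apply INR_fact_neq_0. Qed.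

Lemma C_diag n : C n n = 1.
Proof. unfold C. rewrite Nat.sub_diag. simpl. field. apply INR_fact_neq_0. Qed.

(* The [k]-th derivative of [(s^2 - 1)^n = (s - 1)^n ((s - 1) + 2)^n], expanded binomially. *)
Definition rodrigues_deriv (n k : nat) (s : R) : R :=
  sum_f_R0 (fun i => C n i * 2 ^ (n - i) * falling (n + i) k * (s - 1) ^ (n + i - k)) n.

Lemma derivable_pt_lim_sum_f_R0 (F : nat -> R -> R) (F' : nat -> R) x N :
  (forall i, (i <= N)%nat -> derivable_pt_lim (F i) x (F' i)) ->
  derivable_pt_lim (fun s => sum_f_R0 (fun i => F i s) N) x (sum_f_R0 F' N).
Proof.
  induction N as [|N IH]; intros D; simpl; [apply D; lia|].
  apply derivable_pt_lim_plus_fun; [apply IH; intros; apply D|apply D]; lia.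
Qed.

Lemma derivable_pt_lim_rodrigues_deriv n k s :
  derivable_pt_lim (rodrigues_deriv n k) s (rodrigues_deriv n (S k) s).
Proof.
  apply (derivable_pt_lim_sum_f_R0
    (fun i s => C n i * 2 ^ (n - i) * falling (n + i) k * (s - 1) ^ (n + i - k))).
  intros i _.
  apply (derivable_pt_lim_ext
    (fun y => C n i * 2 ^ (n - i) * falling (n + i) k * (-1 + 1 * y) ^ (n + i - k)));
    [intros y; do 2 f_equal; ring|].
  eapply derivable_pt_lim_rew.
  - apply derivable_pt_lim_scal_fun, derivable_pt_lim_affine_pow.
  - replace (pred (n + i - k)) with (n + i - S k)%nat by lia.
    replace (-1 + 1 * s) with (s - 1) by ring. simpl. ring.
Qed.

Lemma rodrigues_deriv_0 n s : rodrigues_deriv n 0 s = (s ^ 2 - 1) ^ n.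
Proof.
  replace ((s ^ 2 - 1) ^ n) with ((s - 1) ^ n * ((s - 1) + 2) ^ n)
    by (rewrite <- Rpow_mult_distr; f_equal; ring).
  unfold rodrigues_deriv. rewrite binomial, scal_sum. apply sum_eq. intros i _.
  simpl falling. rewrite Nat.sub_0_r, pow_add. ring.
Qed.

Lemma rodrigues_deriv_1 n s :
  (s ^ 2 - 1) * rodrigues_deriv n 1 s = 2 * INR n * s * rodrigues_deriv n 0 s.
Proof.
  assert (D : derivable_pt_lim (rodrigues_deriv n 0) s
                (INR n * (s ^ 2 - 1) ^ pred n * (2 * s))).
  { apply (derivable_pt_lim_ext (fun y => (y ^ 2 - 1) ^ n));
      [intros; symmetry; apply rodrigues_deriv_0|].
    apply (derivable_pt_lim_comp (fun y => y ^ 2 - 1) (fun y => y ^ n));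
      [|apply derivable_pt_lim_pow].
    eapply derivable_pt_lim_rew.
    - apply derivable_pt_lim_minus; [apply derivable_pt_lim_pow|apply derivable_pt_lim_const].
    - simpl. ring. }
  rewrite (uniqueness_limite _ _ _ _ (derivable_pt_lim_rodrigues_deriv n 0 s) D).
  rewrite rodrigues_deriv_0. destruct n; [simpl; ring|cbn [pred pow]; ring].
Qed.

(* With [g_k = rodrigues_deriv n k]: differentiating [(s^2 - 1) g_1 = 2 n s g_0] [m] times
   (Leibniz rule) gives [leibniz_defect n m = 0]. *)
Definition leibniz_defect (n m : nat) (s : R) : R :=
  (s ^ 2 - 1) * rodrigues_deriv n (S m) s + 2 * (INR m - INR n) * s * rodrigues_deriv n m s
  + (INR m * (INR m - 1) - 2 * INR n * INR m) * rodrigues_deriv n (pred m) s.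

Lemma derivable_pt_lim_leibniz_defect n m s :
  derivable_pt_lim (leibniz_defect n m) s (leibniz_defect n (S m) s).
Proof.
  set (al := 2 * (INR m - INR n)). set (be := INR m * (INR m - 1) - 2 * INR n * INR m).
  apply (derivable_pt_lim_ext (fun y => ((y ^ 2 - 1) * rodrigues_deriv n (S m) y
     + (al * y) * rodrigues_deriv n m y) + be * rodrigues_deriv n (pred m) y));
    [intros y; unfold leibniz_defect, al, be; cbv beta; ring|].
  eapply derivable_pt_lim_rew.
  - repeat apply derivable_pt_lim_plus_fun.
    + apply derivable_pt_lim_mult_fun; [|apply derivable_pt_lim_rodrigues_deriv].
      apply derivable_pt_lim_minus; [apply derivable_pt_lim_pow|apply derivable_pt_lim_const].
    + apply derivable_pt_lim_mult_fun; [|apply derivable_pt_lim_rodrigues_deriv].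
      apply derivable_pt_lim_scal_fun, derivable_pt_lim_id.
    + apply derivable_pt_lim_scal_fun, derivable_pt_lim_rodrigues_deriv.
  - unfold leibniz_defect, al, be. rewrite S_INR.
    destruct m; simpl; ring.
Qed.

Lemma leibniz_defect_zero n m s : leibniz_defect n m s = 0.
Proof.
  revert s. induction m as [|m IH]; intros s.
  - unfold leibniz_defect. simpl pred. rewrite rodrigues_deriv_1. simpl INR. ring.
  - apply (uniqueness_limite (leibniz_defect n m) s);
      [apply derivable_pt_lim_leibniz_defect|].
    apply (derivable_pt_lim_ext (fun _ => 0)); [intros; symmetry; apply IH|].
    apply derivable_pt_lim_const.
Qed.

Lemma rodrigues_deriv_legendre_eq n s :
  (1 - s ^ 2) * rodrigues_deriv n (S (S n)) s - 2 * s * rodrigues_deriv n (S n) s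
  + INR (pexp n) * rodrigues_deriv n n s = 0.
Proof.
  pose proof (leibniz_defect_zero n (S n) s) as H. unfold leibniz_defect in H.
  simpl pred in H. unfold pexp. rewrite mult_INR, plus_INR, S_INR in *. simpl INR in *. lra.
Qed.

Lemma rodrigues_deriv_top n s : (1 <= n)%nat -> 0 < rodrigues_deriv n (n + n) s.
Proof.
  intros Hn. unfold rodrigues_deriv. destruct n as [|n]; [lia|].
  rewrite tech5, sum_eq_R0.
  - rewrite !Nat.sub_diag, !pow_O, Rplus_0_l, C_diag, !Rmult_1_l, Rmult_1_r. apply falling_pos. lia.
  - intros i Hi. rewrite falling_zero by lia. ring.
Qed.

Lemma rodrigues_deriv_n_at_1 n : (1 <= n)%nat -> 0 < rodrigues_deriv n n 1.
Proof.
  intros Hn. unfold rodrigues_deriv. rewrite decomp_sum by lia. rewrite sum_eq_R0.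
  - rewrite C_0, Nat.add_0_r, Nat.sub_0_r, Nat.sub_diag, pow_O, Rplus_0_r, Rmult_1_r, Rmult_1_l.
    apply Rmult_lt_0_compat; [apply pow_lt; lra|apply falling_pos; lia].
  - intros i _. replace (n + S i - n)%nat with (S i) by lia.
    rewrite Rminus_diag, pow_i by lia. ring.
Qed.

(* If [g_n] and [g_(n+1)] both vanished at [z], [leibniz_defect] would propagate this to every
   higher derivative, including the positive constant [g_(2n)]. *)
Lemma rodrigues_deriv_simple_zero n z : (1 <= n)%nat -> z ^ 2 <> 1 ->
  rodrigues_deriv n n z = 0 -> rodrigues_deriv n (S n) z <> 0.
Proof.
  intros Hn Hz H0 H1.
  assert (Hall : forall k, rodrigues_deriv n (n + k) z = 0 /\ rodrigues_deriv n (S (n + k)) z = 0).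
  { induction k as [|k [A B]]; [rewrite Nat.add_0_r; auto|].
    rewrite <- plus_n_Sm. split; [exact B|].
    pose proof (leibniz_defect_zero n (S (n + k)) z) as E. unfold leibniz_defect in E.
    simpl pred in E. rewrite A, B in E.
    assert (E' : (z ^ 2 - 1) * rodrigues_deriv n (S (S (n + k))) z = 0) by lra.
    apply Rmult_integral in E' as [E'|E']; [lra|exact E']. }
  pose proof (rodrigues_deriv_top n z Hn). destruct (Hall n). lra.
Qed.

Definition legendre_op (n : nat) (F F1 F2 : R -> R) (s : R) : R :=
  (1 - s ^ 2) * F2 s - 2 * s * F1 s + INR (pexp n) * F s.

Definition legendre_sol_on (n : nat) (f f1 f2 : R -> R) : Prop :=
  forall s, -1 < s < 1 ->
    derivable_pt_lim f s (f1 s) /\ derivable_pt_lim f1 s (f2 s) /\ legendre_op n f f1 f2 s = 0.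

Definition legendre_deriv (n k : nat) (s : R) : R :=
  rodrigues_deriv n (n + k) s / (2 ^ n * INR (fact n)).

Lemma rodrigues_scale_pos n : 0 < 2 ^ n * INR (fact n).
Proof. apply Rmult_lt_0_compat; [apply pow_lt; lra|apply INR_fact_lt_0]. Qed.

Lemma is_legendre_eq n L : is_legendre n L -> L = legendre_deriv n 0.
Proof.
  intros [g [Hg0 [Hgd HL]]].
  assert (Hg : forall k, (k <= n)%nat -> g k = rodrigues_deriv n k).
  { induction k as [|k IH]; intros Hk; apply functional_extensionality; intros s.
    - rewrite Hg0, rodrigues_deriv_0. reflexivity.
    - apply (uniqueness_limite (g k) s); [apply Hgd; lia|].
      rewrite IH by lia. apply derivable_pt_lim_rodrigues_deriv. }
  apply functional_extensionality; intros s.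
  unfold legendre_deriv. rewrite HL, Nat.add_0_r, Hg; reflexivity.
Qed.

Lemma derivable_pt_lim_legendre_deriv n k s :
  derivable_pt_lim (legendre_deriv n k) s (legendre_deriv n (S k) s).
Proof.
  unfold legendre_deriv. rewrite <- plus_n_Sm. unfold Rdiv.
  apply (derivable_pt_lim_ext (fun y => / (2 ^ n * INR (fact n)) * rodrigues_deriv n (n + k) y));
    [intros; cbv beta; ring|].
  eapply derivable_pt_lim_rew;
    [apply derivable_pt_lim_scal_fun, derivable_pt_lim_rodrigues_deriv|ring].
Qed.

Lemma legendre_op_legendre_deriv n s :
  legendre_op n (legendre_deriv n 0) (legendre_deriv n 1) (legendre_deriv n 2) s = 0.
Proof.
  unfold legendre_op, legendre_deriv.
  rewrite Nat.add_0_r, <- !plus_n_Sm, Nat.add_0_r.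
  rewrite <- (Rdiv_0_l (2 ^ n * INR (fact n))), <- (rodrigues_deriv_legendre_eq n s).
  field. split; [apply INR_fact_neq_0|apply pow_nonzero; lra].
Qed.

Lemma legendre_deriv_pos_at_1 n : (1 <= n)%nat -> 0 < legendre_deriv n 0 1.
Proof.
  intros Hn. unfold legendre_deriv. rewrite Nat.add_0_r.
  apply Rdiv_lt_0_compat; [apply rodrigues_deriv_n_at_1, Hn|apply rodrigues_scale_pos].
Qed.

Lemma legendre_deriv_simple_zero n z : (1 <= n)%nat -> z ^ 2 <> 1 ->
  legendre_deriv n 0 z = 0 -> legendre_deriv n 1 z <> 0.
Proof.
  intros Hn Hz H0 H1.
  assert (Hk : / (2 ^ n * INR (fact n)) <> 0)
    by (apply Rinv_neq_0_compat; pose proof (rodrigues_scale_pos n); lra).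
  unfold legendre_deriv, Rdiv in *. rewrite Nat.add_0_r in H0. rewrite Nat.add_1_r in H1.
  apply Rmult_integral in H0 as [H0|H0]; [|contradiction].
  apply Rmult_integral in H1 as [H1|H1]; [|contradiction].
  exact (rodrigues_deriv_simple_zero n z Hn Hz H0 H1).
Qed.

Lemma pos_right_of_largest_zero (L : R -> R) z :
  continuity L -> is_largest_zero L z -> 0 < L 1 -> forall s, z < s <= 1 -> 0 < L s.
Proof.
  intros Hc [Hz [_ Hmax]] H1 s Hs.
  destruct (Rlt_le_dec 0 (L s)) as [|Hle]; [assumption|exfalso].
  destruct (IVT_cor L s 1 Hc ltac:(lra)) as [y [Hy Ly]]; [nra|].
  destruct (Req_dec y 1) as [->|Hy1]; [lra|].
  assert (y <= z) by (apply Hmax; [lra|exact Ly]). lra.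
Qed.

(** * The comparison function h_c *)

Lemma pexp_ge_3 n : (2 <= n)%nat -> exists q, pexp n = S (S (S q)).
Proof. intros Hn. exists (pexp n - 3)%nat. unfold pexp. nia. Qed.

Definition hc_deriv1 (n : nat) (c s : R) : R :=
  INR (pexp n) / 2 *
  (((1 + s) / 2) ^ pred (pexp n) + c ^ pexp n * ((1 - s) / 2) ^ pred (pexp n)).

Definition hc_deriv2 (n : nat) (c s : R) : R :=
  INR (pexp n) * INR (pred (pexp n)) / 4 *
  (((1 + s) / 2) ^ pred (pred (pexp n)) - c ^ pexp n * ((1 - s) / 2) ^ pred (pred (pexp n))).

Definition hc_defect (n : nat) (c s : R) : R :=
  INR (pexp n) * INR (pexp n) * ((1 + s) / 2) * ((1 - s) / 2) *
  (((1 + s) / 2) ^ pred (pred (pexp n)) - c ^ pexp n * ((1 - s) / 2) ^ pred (pred (pexp n))).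

Lemma derivable_pt_lim_half_pows a b m s :
  derivable_pt_lim (fun y => a * ((1 + y) / 2) ^ m + b * ((1 - y) / 2) ^ m) s
    (INR m / 2 * (a * ((1 + s) / 2) ^ pred m - b * ((1 - s) / 2) ^ pred m)).
Proof.
  apply (derivable_pt_lim_ext
    (fun y => a * (/ 2 + / 2 * y) ^ m + b * (/ 2 + - / 2 * y) ^ m));
    [intros y; replace (/ 2 + / 2 * y) with ((1 + y) / 2) by field;
     replace (/ 2 + - / 2 * y) with ((1 - y) / 2) by field; reflexivity|].
  eapply derivable_pt_lim_rew.
  - apply derivable_pt_lim_plus_fun; apply derivable_pt_lim_scal_fun, derivable_pt_lim_affine_pow.
  - replace (/ 2 + / 2 * s) with ((1 + s) / 2) by field.
    replace (/ 2 + - / 2 * s) with ((1 - s) / 2) by field. field.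
Qed.

Lemma derivable_pt_lim_hc n c s : derivable_pt_lim (hc n c) s (hc_deriv1 n c s).
Proof.
  apply (derivable_pt_lim_ext (fun y => 1 * ((1 + y) / 2) ^ pexp n
                                        + - c ^ pexp n * ((1 - y) / 2) ^ pexp n));
    [intros; unfold hc; ring|].
  eapply derivable_pt_lim_rew; [apply derivable_pt_lim_half_pows|unfold hc_deriv1; ring].
Qed.

Lemma derivable_pt_lim_hc_deriv1 n c s : derivable_pt_lim (hc_deriv1 n c) s (hc_deriv2 n c s).
Proof.
  apply (derivable_pt_lim_ext
    (fun y => INR (pexp n) / 2 * ((1 + y) / 2) ^ pred (pexp n)
              + INR (pexp n) / 2 * c ^ pexp n * ((1 - y) / 2) ^ pred (pexp n)));
    [intros; unfold hc_deriv1; ring|].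
  eapply derivable_pt_lim_rew; [apply derivable_pt_lim_half_pows|unfold hc_deriv2; field].
Qed.

Lemma legendre_op_hc n c s : (2 <= n)%nat ->
  legendre_op n (hc n c) (hc_deriv1 n c) (hc_deriv2 n c) s = hc_defect n c s.
Proof.
  intros Hn. destruct (pexp_ge_3 n Hn) as [q Hq].
  unfold legendre_op, hc, hc_deriv1, hc_deriv2, hc_defect. rewrite Hq.
  simpl pred. rewrite !S_INR. simpl pow. field.
Qed.

Lemma hc_defect_pos_after n c u t : (2 <= n)%nat -> 0 < c -> -1 < u < t -> t < 1 ->
  0 <= hc_defect n c u -> 0 < hc_defect n c t.
Proof.
  intros Hn Hc Hu Ht Hdu. destruct (pexp_ge_3 n Hn) as [q Hq].
  unfold hc_defect in *. rewrite Hq in *. simpl pred in *.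
  set (P := INR (S (S (S q)))) in *. set (C := c ^ S (S (S q))) in *.
  assert (0 < P) by (apply lt_0_INR; lia). assert (0 < C) by (apply pow_lt; lra).
  assert (Hbr : 0 <= ((1 + u) / 2) ^ S q - C * ((1 - u) / 2) ^ S q).
  { apply (Rmult_le_reg_l (P * P * ((1 + u) / 2) * ((1 - u) / 2)));
      [repeat apply Rmult_lt_0_compat; lra|lra]. }
  assert (((1 + u) / 2) ^ S q < ((1 + t) / 2) ^ S q) by (apply pow_lt_pow_l; [lra|lia]).
  assert (((1 - t) / 2) ^ S q < ((1 - u) / 2) ^ S q) by (apply pow_lt_pow_l; [lra|lia]).
  assert (0 < ((1 + t) / 2) ^ S q - C * ((1 - t) / 2) ^ S q) by nra.
  repeat apply Rmult_lt_0_compat; lra.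
Qed.

Lemma hc_deriv1_pos n c s : (2 <= n)%nat -> 0 < c -> -1 < s < 1 -> 0 < hc_deriv1 n c s.
Proof.
  intros Hn Hc Hs. unfold hc_deriv1.
  assert (0 < INR (pexp n)) by (apply lt_0_INR; unfold pexp; nia).
  assert (0 < ((1 + s) / 2) ^ pred (pexp n)) by (apply pow_lt; lra).
  assert (0 < c ^ pexp n * ((1 - s) / 2) ^ pred (pexp n))
    by (apply Rmult_lt_0_compat; apply pow_lt; lra).
  apply Rmult_lt_0_compat; lra.
Qed.

Lemma hc_pos n c s : (2 <= n)%nat -> 0 < c -> s <= 1 -> c * (1 - s) < 1 + s -> 0 < hc n c s.
Proof.
  intros Hn Hc Hs H. unfold hc. rewrite <- Rpow_mult_distr. apply Rlt_0_minus.
  apply pow_lt_pow_l; [split; [apply Rmult_le_pos|]; lra|unfold pexp; nia].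
Qed.

Lemma hc_at_1 n c : (2 <= n)%nat -> hc n c 1 = 1.
Proof.
  intros Hn. unfold hc.
  replace ((1 + 1) / 2) with 1 by field. replace ((1 - 1) / 2) with 0 by field.
  rewrite pow1, pow_i by (unfold pexp; nia). ring.
Qed.

Lemma hc_at_threshold n z : -1 < z < 1 -> hc n ((1 + z) / (1 - z)) z = 0.
Proof.
  intros Hz. unfold hc. rewrite <- Rpow_mult_distr.
  replace ((1 + z) / (1 - z) * ((1 - z) / 2)) with ((1 + z) / 2) by (field; lra). ring.
Qed.

Definition wronskian (F F1 G G1 : R -> R) (s : R) : R :=
  (1 - s ^ 2) * (F1 s * G s - F s * G1 s).

Lemma derivable_pt_lim_wronskian n (F F1 F2 G G1 G2 : R -> R) s :
  derivable_pt_lim F s (F1 s) -> derivable_pt_lim F1 s (F2 s) ->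
  derivable_pt_lim G s (G1 s) -> derivable_pt_lim G1 s (G2 s) ->
  derivable_pt_lim (wronskian F F1 G G1) s
    (G s * legendre_op n F F1 F2 s - F s * legendre_op n G G1 G2 s).
Proof.
  intros DF DF1 DG DG1.
  apply (derivable_pt_lim_ext
    (fun y => (1 + (-1) * y ^ 2) * (F1 y * G y + (-1) * (F y * G1 y))));
    [intros; unfold wronskian; ring|].
  eapply derivable_pt_lim_rew.
  - apply derivable_pt_lim_mult_fun.
    + apply derivable_pt_lim_plus_fun; [apply derivable_pt_lim_const|].
      apply derivable_pt_lim_scal_fun, derivable_pt_lim_pow.
    + apply derivable_pt_lim_plus_fun; [apply derivable_pt_lim_mult_fun; [apply DF1|apply DG]|].
      apply derivable_pt_lim_scal_fun, derivable_pt_lim_mult_fun; [apply DF|apply DG1].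
  - unfold legendre_op. simpl. ring.
Qed.

(** * Comparison of multiples of L_n with h_c *)

Section Comparison.

Variables (n : nat) (L L1 L2 : R -> R) (z : R).
Hypothesis Hn : (2 <= n)%nat.
Hypothesis DL : forall s, derivable_pt_lim L s (L1 s).
Hypothesis DL1 : forall s, derivable_pt_lim L1 s (L2 s).
Hypothesis L_sol : forall s, legendre_op n L L1 L2 s = 0.
Hypothesis Hz : -1 < z < 1.
Hypothesis Lz : L z = 0.
Hypothesis L_pos : forall s, z < s <= 1 -> 0 < L s.

Lemma L1_nonneg_at_zero : 0 <= L1 z.
Proof.
  apply (derivative_nonneg_of_right_nonneg L z (L1 z) 1); [apply DL|exact Lz|lra|].
  intros y Hy. left. apply L_pos. lra.
Qed.

Lemma derivable_pt_lim_scaled_L a s : derivable_pt_lim (fun y => a * L y) s (a * L1 s).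
Proof. apply derivable_pt_lim_scal_fun, DL. Qed.

Lemma continuity_pt_scaled_L a x : continuity_pt (fun y => a * L y) x.
Proof. apply derivable_continuous_pt. exists (a * L1 x). apply derivable_pt_lim_scaled_L. Qed.

Lemma derivable_pt_lim_scaled_L1 a s : derivable_pt_lim (fun y => a * L1 y) s (a * L2 s).
Proof. apply derivable_pt_lim_scal_fun, DL1. Qed.

Definition wronskian_hc (a c : R) : R -> R :=
  wronskian (fun y => a * L y) (fun y => a * L1 y) (hc n c) (hc_deriv1 n c).

Lemma derivable_pt_lim_wronskian_hc a c s :
  derivable_pt_lim (wronskian_hc a c) s (- (a * L s) * hc_defect n c s).
Proof.
  unfold wronskian_hc.
  eapply derivable_pt_lim_rew.
  - apply (derivable_pt_lim_wronskian n _ _ (fun y => a * L2 y) _ _ (hc_deriv2 n c));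
      [apply derivable_pt_lim_scaled_L|apply derivable_pt_lim_scaled_L1
      |apply derivable_pt_lim_hc|apply derivable_pt_lim_hc_deriv1].
  - rewrite legendre_op_hc by exact Hn.
    replace (legendre_op n _ _ _ s) with (a * legendre_op n L L1 L2 s)
      by (unfold legendre_op; ring).
    rewrite L_sol. ring.
Qed.

(* [hc_defect] changes sign at most once, from - to +, so once the Wronskian has not increased
   on some [[u, x]], it strictly decreases from [x] on. *)
Lemma wronskian_hc_decreasing a c u x : 0 < a -> 0 < c -> z <= u < x -> x < 1 ->
  wronskian_hc a c x <= wronskian_hc a c u ->
  forall s t, x <= s -> s < t <= 1 -> wronskian_hc a c t < wronskian_hc a c s.
Proof.
  intros Ha Hc Hux Hx HW s t Hxs Hst. set (W := wronskian_hc a c) in *.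
  destruct (MVT_cor2 W (fun y => - (a * L y) * hc_defect n c y) u x) as [xi [Hm Hxi]];
    [lra|intros; apply derivable_pt_lim_wronskian_hc|].
  assert (HLxi : 0 < a * L xi) by (apply Rmult_lt_0_compat; [|apply L_pos]; lra).
  assert (Hdxi : 0 <= hc_defect n c xi).
  { destruct (Rle_lt_dec 0 (hc_defect n c xi)) as [|Hneg]; [assumption|].
    assert (0 < (a * L xi) * (- hc_defect n c xi) * (x - u))
      by (apply Rmult_lt_0_compat; [apply Rmult_lt_0_compat|]; lra).
    lra. }
  destruct (MVT_cor2 W (fun y => - (a * L y) * hc_defect n c y) s t) as [eta [Hm' Heta]];
    [lra|intros; apply derivable_pt_lim_wronskian_hc|].
  assert (0 < hc_defect n c eta) by (apply (hc_defect_pos_after n c xi eta Hn Hc); lra).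
  assert (0 < a * L eta) by (apply Rmult_lt_0_compat; [|apply L_pos]; lra).
  assert (0 < (a * L eta) * hc_defect n c eta * (t - s))
    by (apply Rmult_lt_0_compat; [apply Rmult_lt_0_compat|]; lra).
  lra.
Qed.

Lemma derivable_pt_lim_ratio_hc a c y : hc n c y <> 0 ->
  derivable_pt_lim (fun s => a * L s / hc n c s) y
    ((a * L1 y * hc n c y - a * L y * hc_deriv1 n c y) / hc n c y ^ 2).
Proof.
  intros Hh. apply (derivable_pt_lim_ratio (fun s => a * L s) (hc n c));
    [apply derivable_pt_lim_scaled_L|apply derivable_pt_lim_hc|exact Hh].
Qed.

Lemma ratio_hc_derivative_wronskian a c y : -1 < y < 1 -> hc n c y <> 0 ->
  (a * L1 y * hc n c y - a * L y * hc_deriv1 n c y) / hc n c y ^ 2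
  = wronskian_hc a c y / ((1 - y ^ 2) * hc n c y ^ 2).
Proof.
  intros Hy Hh. unfold wronskian_hc, wronskian. field. split; [exact Hh|nra].
Qed.

Lemma hc_pos_right c : 0 < c -> c * (1 - z) <= 1 + z -> forall s, z < s <= 1 -> 0 < hc n c s.
Proof.
  intros Hc Hcz s Hs. apply hc_pos; [exact Hn|exact Hc|lra|].
  assert (0 < c * (s - z)) by (apply Rmult_lt_0_compat; lra). lra.
Qed.

Lemma wronskian_hc_pos a c : 0 < a -> 0 < c -> wronskian_hc a c z = 0 ->
  forall s, z < s < 1 -> 0 < wronskian_hc a c s.
Proof.
  intros Ha Hc Wz s Hs. destruct (Rlt_le_dec 0 (wronskian_hc a c s)) as [|Hle]; [assumption|].
  assert (W1 : wronskian_hc a c 1 = 0) by (unfold wronskian_hc, wronskian; ring).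
  pose proof (wronskian_hc_decreasing a c z s Ha Hc ltac:(lra) ltac:(lra) ltac:(lra) s 1).
  lra.
Qed.

Lemma scaled_L_div_hc_increasing a c : 0 < a -> 0 < c -> c * (1 - z) <= 1 + z ->
  hc n c z = 0 -> forall u v, z < u < v -> v <= 1 -> a * L u / hc n c u < a * L v / hc n c v.
Proof.
  intros Ha Hc Hcz hz u v Huv Hv. pose proof (hc_pos_right c Hc Hcz) as hpos.
  apply (lt_of_derivative_pos (fun y => a * L y / hc n c y)
    (fun y => (a * L1 y * hc n c y - a * L y * hc_deriv1 n c y) / hc n c y ^ 2)); [lra| |].
  - intros y Hy. apply derivable_pt_lim_ratio_hc. pose proof (hpos y ltac:(lra)). lra.
  - intros y Hy. pose proof (hpos y ltac:(lra)).
    rewrite ratio_hc_derivative_wronskian by lra. apply Rdiv_lt_0_compat.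
    + apply wronskian_hc_pos; [exact Ha|exact Hc| |lra].
      unfold wronskian_hc, wronskian. rewrite Lz, hz. ring.
    + apply Rmult_lt_0_compat; [nra|apply pow_lt; lra].
Qed.

(* [a L] and [h_c] vanish at [z] with the same slope, so for [q < 1] the function [a L - q h_c]
   has slope [(1 - q) h_c'(z) > 0] there and cannot stay below 0 just right of [z]. *)
Lemma scaled_L_div_hc_ge_1 a c : 0 < a -> 0 < c -> c * (1 - z) <= 1 + z ->
  hc n c z = 0 -> a * L1 z = hc_deriv1 n c z -> forall t, z < t <= 1 -> 1 <= a * L t / hc n c t.
Proof.
  intros Ha Hc Hcz hz HaL1 t Ht. pose proof (hc_pos_right c Hc Hcz) as hpos.
  set (q := a * L t / hc n c t).
  destruct (Rle_lt_dec 1 q) as [|Hq]; [assumption|exfalso].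
  assert (HG : 0 <= q * hc_deriv1 n c z + - a * L1 z).
  { apply (derivative_nonneg_of_right_nonneg (fun y => q * hc n c y + - a * L y) z _ t).
    - apply derivable_pt_lim_plus_fun; apply derivable_pt_lim_scal_fun;
        [apply derivable_pt_lim_hc|apply DL].
    - rewrite hz, Lz. ring.
    - lra.
    - intros y Hy. pose proof (hpos y ltac:(lra)).
      pose proof (scaled_L_div_hc_increasing a c Ha Hc Hcz hz y t ltac:(lra) ltac:(lra)) as Hyt.
      fold q in Hyt. apply (Rdiv_lt_iff _ _ (hc n c y)) in Hyt; lra. }
  pose proof (hc_deriv1_pos n c z Hn Hc Hz).
  assert (0 < (1 - q) * hc_deriv1 n c z) by (apply Rmult_lt_0_compat; lra).
  lra.
Qed.

Lemma hc_lt_scaled_L_of_tangent a c : 0 < a -> 0 < c -> c * (1 - z) <= 1 + z ->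
  hc n c z = 0 -> a * L1 z = hc_deriv1 n c z -> forall s, z < s <= 1 -> hc n c s < a * L s.
Proof.
  intros Ha Hc Hcz hz HaL1 s Hs. pose proof (hc_pos_right c Hc Hcz s Hs).
  pose proof (scaled_L_div_hc_ge_1 a c Ha Hc Hcz hz HaL1 ((z + s) / 2) ltac:(lra)).
  pose proof (scaled_L_div_hc_increasing a c Ha Hc Hcz hz ((z + s) / 2) s ltac:(lra) ltac:(lra)).
  assert (Hr : 1 < a * L s / hc n c s) by lra.
  apply (lt_Rdiv_iff _ _ (hc n c s)) in Hr; lra.
Qed.

Lemma admissible_at_threshold : L1 z <> 0 -> admissible_c n ((1 + z) / (1 - z)).
Proof.
  intros HL1z. set (c := (1 + z) / (1 - z)).
  assert (Hc : 0 < c) by (unfold c; apply Rdiv_lt_0_compat; lra).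
  assert (Hcz : c * (1 - z) = 1 + z) by (unfold c; field; lra).
  assert (hz : hc n c z = 0) by (apply hc_at_threshold, Hz).
  pose proof L1_nonneg_at_zero. pose proof (hc_deriv1_pos n c z Hn Hc Hz).
  set (a := hc_deriv1 n c z / L1 z).
  assert (Ha : 0 < a) by (apply Rdiv_lt_0_compat; lra).
  assert (HaL1 : a * L1 z = hc_deriv1 n c z) by (unfold a; field; exact HL1z).
  pose proof (hc_lt_scaled_L_of_tangent a c Ha Hc ltac:(lra) hz HaL1) as Hgt.
  exists (fun s => a * L s). split; [exact Hc|]. split; [|split; [|split]].
  - exists (fun s => a * L1 s), (fun s => a * L2 s). intros s _.
    split; [apply derivable_pt_lim_scaled_L|split; [apply derivable_pt_lim_scaled_L1|]].
    transitivity (a * legendre_op n L L1 L2 s); [unfold legendre_op; ring|].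
    rewrite L_sol. ring.
  - apply (limit1_in_continuity_pt (fun s => a * L s)), continuity_pt_scaled_L.
  - pose proof (Hgt 1 ltac:(lra)) as Hgt1. rewrite hc_at_1 in Hgt1 by exact Hn. lra.
  - exists z, (hc_deriv1 n c z). split; [exact Hz|]. split; [rewrite Lz, hz; ring|].
    split; [rewrite <- HaL1; apply derivable_pt_lim_scaled_L|].
    split; [apply derivable_pt_lim_hc|]. intros s Hs. apply Hgt, Hs.
Qed.

Lemma scaled_L_lt_hc_after_tangent a c x : 0 < a -> 0 < c ->
  (forall s, z <= s <= 1 -> 0 < hc n c s) -> z < x < 1 ->
  a * L x = hc n c x -> a * L1 x = hc_deriv1 n c x ->
  exists t, x < t < 1 /\ a * L t < hc n c t.
Proof.
  intros Ha Hc hpos Hx HLx HL1x.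
  assert (Wx : wronskian_hc a c x = 0)
    by (unfold wronskian_hc, wronskian; rewrite HLx, HL1x; ring).
  assert (Wz : 0 <= wronskian_hc a c z).
  { unfold wronskian_hc, wronskian. rewrite Lz.
    pose proof L1_nonneg_at_zero. pose proof (hpos z ltac:(lra)).
    assert (0 <= a * L1 z * hc n c z) by (apply Rmult_le_pos; [apply Rmult_le_pos|]; lra).
    assert (0 < 1 - z ^ 2) by nra. nra. }
  set (t := (x + 1) / 2). exists t. split; [unfold t; lra|].
  assert (Wneg : forall y, x < y <= t -> wronskian_hc a c y < 0).
  { intros y Hy. rewrite <- Wx.
    apply (wronskian_hc_decreasing a c z x); unfold t in *; lra. }
  assert (Hr : a * L t / hc n c t < a * L x / hc n c x).
  { apply (lt_of_derivative_neg (fun y => a * L y / hc n c y)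
      (fun y => (a * L1 y * hc n c y - a * L y * hc_deriv1 n c y) / hc n c y ^ 2));
      [unfold t; lra| |].
    - intros y Hy. apply derivable_pt_lim_ratio_hc.
      pose proof (hpos y ltac:(unfold t in *; lra)). lra.
    - intros y Hy. pose proof (hpos y ltac:(unfold t in *; lra)).
      rewrite ratio_hc_derivative_wronskian by (unfold t in *; lra).
      apply Rdiv_neg_pos; [apply Wneg; lra|].
      apply Rmult_lt_0_compat; [unfold t in *; nra|apply pow_lt; lra]. }
  pose proof (hpos x ltac:(lra)). pose proof (hpos t ltac:(unfold t; lra)).
  rewrite HLx, Rdiv_diag in Hr by lra.
  apply (Rdiv_lt_iff _ _ (hc n c t)) in Hr; lra.
Qed.

Lemma wronskian_L_const (f f1 f2 : R -> R) :
  legendre_sol_on n f f1 f2 ->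
  forall s t, -1 < s < 1 -> -1 < t < 1 -> wronskian f f1 L L1 s = wronskian f f1 L L1 t.
Proof.
  intros Hsol s t Hs Ht. apply (eq_of_derivative_zero _ (-1) 1); [|exact Hs|exact Ht].
  intros y Hy. destruct (Hsol y Hy) as [D1 [D2 E]].
  eapply derivable_pt_lim_rew; [apply (derivable_pt_lim_wronskian n f f1 f2 L L1 L2); auto|].
  rewrite E, L_sol. ring.
Qed.

Lemma derivable_pt_lim_ratio_L (f f1 : R -> R) y : -1 < y < 1 -> L y <> 0 ->
  derivable_pt_lim f y (f1 y) ->
  derivable_pt_lim (fun s => f s / L s) y (wronskian f f1 L L1 y / ((1 - y ^ 2) * L y ^ 2)).
Proof.
  intros Hy HL Df. eapply derivable_pt_lim_rew;
    [apply (derivable_pt_lim_ratio f L); [exact Df|apply DL|exact HL]|].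
  unfold wronskian. field. split; [exact HL|nra].
Qed.

Lemma bounds_near_1 (f : R -> R) : limit1_in f (fun s => -1 < s < 1) (f 1) 1 ->
  exists b, z <= b < 1 /\ forall s, b < s < 1 ->
    Rabs (f s) <= Rabs (f 1) + 1 /\ L 1 / 2 <= L s <= 3 * L 1 / 2.
Proof.
  intros Hlim. assert (Hl : 0 < L 1) by (apply L_pos; lra).
  destruct (limit1_in_close_left f _ (f 1) 1 1 Hlim ltac:(lra)) as [b1 [Hb1 H1]].
  assert (HcL : continuity_pt L 1)
    by (apply derivable_continuous_pt; exists (L1 1); apply DL).
  destruct (limit1_in_close_left L (fun _ => True) (L 1) 1 (L 1 / 2)
              (limit1_in_continuity_pt L _ 1 HcL) ltac:(lra)) as [b2 [Hb2 H2]].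
  pose proof (Rmax_l b1 b2). pose proof (Rmax_r b1 b2).
  pose proof (Rmax_l z (Rmax b1 b2)). pose proof (Rmax_r z (Rmax b1 b2)).
  exists (Rmax z (Rmax b1 b2)). split; [split; [lra|]|].
  - apply Rmax_lub_lt; [lra|apply Rmax_lub_lt; assumption].
  - intros s Hs. specialize (H1 s ltac:(lra) ltac:(lra)). specialize (H2 s I ltac:(lra)).
    pose proof (Rabs_triang_inv (f s) (f 1)). apply Rabs_def2 in H2. lra.
Qed.

(* A nonzero (constant) Wronskian [K] would give [(K f / L)' >= k / (1 - s)] near [1], so
   [f / L] could not stay bounded there. *)
Lemma wronskian_L_zero (f f1 f2 : R -> R) :
  legendre_sol_on n f f1 f2 ->
  limit1_in f (fun s => -1 < s < 1) (f 1) 1 ->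
  forall s, -1 < s < 1 -> wronskian f f1 L L1 s = 0.
Proof.
  intros Hsol Hlim s Hs. set (K := wronskian f f1 L L1 s).
  destruct (Req_dec K 0) as [|HK]; [assumption|exfalso].
  destruct (bounds_near_1 f Hlim) as [b [Hb Hbnd]].
  set (l := L 1) in *. assert (Hl : 0 < l) by (apply L_pos; lra).
  assert (HKK : 0 < K * K) by (pose proof (Rsqr_pos_lt K HK); unfold Rsqr in *; lra).
  assert (HKy : forall y, -1 < y < 1 -> wronskian f f1 L L1 y = K)
    by (intros y Hy; apply (wronskian_L_const f f1 f2); assumption).
  set (k := 2 * (K * K) / (9 * (l * l))).
  assert (Hk : 0 < k) by (apply Rdiv_lt_0_compat; nra).
  destruct (unbounded_of_derivative_ge_inv (fun y => K * (f y / L y))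
              (fun y => K * (K / ((1 - y ^ 2) * L y ^ 2))) b k ltac:(lra) Hk)
    with (B := Rabs K * (2 * (Rabs (f 1) + 1) / l)) as [t [Ht HBt]].
  - intros y Hy. destruct (Hbnd y Hy) as [_ HLy].
    assert (HD : 0 < (1 - y ^ 2) * L y ^ 2) by (apply Rmult_lt_0_compat; simpl; nra).
    split.
    + apply derivable_pt_lim_scal_fun. rewrite <- (HKy y) by lra.
      apply derivable_pt_lim_ratio_L; [lra|lra|apply (Hsol y); lra].
    + assert (HD' : (1 - y ^ 2) * L y ^ 2 <= (1 - y) * (9 * (l * l) / 2)).
      { replace (1 - y ^ 2) with ((1 - y) * (1 + y)) by ring. rewrite Rmult_assoc.
        apply Rmult_le_compat_l; [lra|]. simpl. nra. }
      replace (k / (1 - y)) with ((K * K) / ((1 - y) * (9 * (l * l) / 2)))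
        by (unfold k; field; split; lra).
      replace (K * (K / ((1 - y ^ 2) * L y ^ 2))) with ((K * K) / ((1 - y ^ 2) * L y ^ 2))
        by (field; split; [lra|nra]).
      apply Rmult_le_compat_l; [lra|]. apply Rinv_le_contravar; assumption.
  - destruct (Hbnd t Ht) as [Hft HLt].
    assert (Habs : Rabs (K * (f t / L t)) <= Rabs K * (2 * (Rabs (f 1) + 1) / l)).
    { rewrite Rabs_mult. apply Rmult_le_compat_l; [apply Rabs_pos|].
      unfold Rdiv. rewrite Rabs_mult, Rabs_inv, (Rabs_pos_eq (L t)) by lra.
      replace (2 * (Rabs (f 1) + 1) * / l) with ((Rabs (f 1) + 1) * / (l / 2)) by (field; lra).
      apply Rmult_le_compat; [apply Rabs_pos|left; apply Rinv_0_lt_compat; lra|lra|].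
      apply Rinv_le_contravar; lra. }
    pose proof (Rle_abs (K * (f t / L t))). lra.
Qed.

Lemma bounded_solution_is_multiple (f f1 f2 : R -> R) :
  legendre_sol_on n f f1 f2 ->
  limit1_in f (fun s => -1 < s < 1) (f 1) 1 ->
  exists a, (forall s, z < s < 1 -> f s = a * L s) /\ f 1 = a * L 1.
Proof.
  intros Hsol Hlim. set (m := (z + 1) / 2). exists (f m / L m).
  assert (Hfa : forall s, z < s < 1 -> f s = f m / L m * L s).
  { intros s Hs. pose proof (L_pos s ltac:(lra)).
    assert (Hconst : f s / L s = f m / L m).
    { apply (eq_of_derivative_zero (fun y => f y / L y) z 1); [|exact Hs|unfold m; lra].
      intros y Hy. pose proof (L_pos y ltac:(lra)).
      eapply derivable_pt_lim_rew;
        [apply derivable_pt_lim_ratio_L; [lra|lra|apply (Hsol y); lra]|].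
      rewrite (wronskian_L_zero f f1 f2 Hsol Hlim y) by lra. unfold Rdiv. ring. }
    rewrite <- Hconst. field. lra. }
  split; [exact Hfa|].
  apply (limit1_in_interval_unique f (fun s => f m / L m * L s) z 1 1); [lra|lra|exact Hfa| |].
  - apply (limit1_in_subset f (fun s => -1 < s < 1)); [intros; lra|exact Hlim].
  - apply (limit1_in_continuity_pt (fun s => f m / L m * L s)), continuity_pt_scaled_L.
Qed.

Lemma threshold_le_of_admissible c : admissible_c n c -> (1 + z) / (1 - z) <= c.
Proof.
  intros [f [Hc [[f1 [f2 Hsol]] [Hlim [Hf1 [x [d [Hx [fx [Dfx [Dhx Hgt]]]]]]]]]]].
  destruct (bounded_solution_is_multiple f f1 f2 Hsol Hlim) as [a [Hfa Hf1a]].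
  assert (Ha : 0 < a) by (pose proof (L_pos 1 ltac:(lra)); nra).
  assert (fz : f z = 0).
  { rewrite <- (Rmult_0_r a), <- Lz.
    apply (limit1_in_interval_unique f (fun s => a * L s) z 1 z); [lra|lra|exact Hfa| |].
    - apply limit1_in_continuity_pt, derivable_continuous_pt.
      exists (f1 z). apply (Hsol z Hz).
    - apply (limit1_in_continuity_pt (fun s => a * L s)), continuity_pt_scaled_L. }
  destruct (Rle_lt_dec ((1 + z) / (1 - z)) c) as [|Hlt]; [assumption|exfalso].
  assert (Hcz : c * (1 - z) < 1 + z).
  { apply (Rmult_lt_compat_r (1 - z)) in Hlt; [|lra].
    replace ((1 + z) / (1 - z) * (1 - z)) with (1 + z) in Hlt by (field; lra). exact Hlt. }
  assert (hpos : forall s, z <= s <= 1 -> 0 < hc n c s).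
  { intros s Hs. apply hc_pos; [exact Hn|exact Hc|lra|]. nra. }
  assert (Hxz : z < x).
  { destruct (Rle_lt_dec x z) as [Hle|]; [exfalso|assumption].
    assert (hc n c z <= f z).
    { destruct (Req_dec x z) as [<-|]; [lra|]. left. apply Hgt. lra. }
    pose proof (hpos z ltac:(lra)). lra. }
  assert (HLx : a * L x = hc n c x) by (rewrite <- Hfa; [exact fx|lra]).
  assert (HL1x : a * L1 x = hc_deriv1 n c x).
  { rewrite <- (uniqueness_limite _ _ _ _ Dhx (derivable_pt_lim_hc n c x)).
    apply (uniqueness_limite (fun s => a * L s) x); [apply derivable_pt_lim_scaled_L|].
    apply (derivable_pt_lim_locally_ext f _ x z 1); [lra|intros; apply Hfa; lra|exact Dfx]. }
  destruct (scaled_L_lt_hc_after_tangent a c x Ha Hc hpos ltac:(lra) HLx HL1x)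
    as [t [Ht Hlt']].
  specialize (Hgt t ltac:(lra)). rewrite Hfa in Hgt by lra. lra.
Qed.

End Comparison.

Theorem theorem5p2 (n : nat) (L : R -> R) (z : R) :
  (2 <= n)%nat -> is_legendre n L -> is_largest_zero L z ->
  admissible_c n ((1 + z) / (1 - z)) /\
  (forall c, admissible_c n c -> (1 + z) / (1 - z) <= c).
Proof.
  intros Hn HL Hzero. apply is_legendre_eq in HL. subst L.
  assert (Lpos : forall s, z < s <= 1 -> 0 < legendre_deriv n 0 s).
  { apply pos_right_of_largest_zero; [|exact Hzero|apply legendre_deriv_pos_at_1; lia].
    intros x. apply derivable_continuous_pt.
    exists (legendre_deriv n 1 x). apply derivable_pt_lim_legendre_deriv. }
  destruct Hzero as [Hz [Lz _]].
  pose proof (derivable_pt_lim_legendre_deriv n 0) as DL.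
  pose proof (derivable_pt_lim_legendre_deriv n 1) as DL1.
  pose proof (legendre_op_legendre_deriv n) as L_sol.
  split.
  - apply (admissible_at_threshold n _ _ _ z Hn DL DL1 L_sol Hz Lz Lpos).
    apply legendre_deriv_simple_zero; [lia|nra|exact Lz].
  - intros c. apply (threshold_le_of_admissible n _ _ _ z Hn DL DL1 L_sol Hz Lz Lpos).
Qed.
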